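(* Let $k$ and $\tau$ be integers with $k \ge 1$ and $1 \le \tau \le k$. Let $G$ be obtained from a complete bipartite graph with bipartition $(A,B)$, where $|A| \ge 4k$ and $|B| \ge 4k$, by adding all edges among some set of $2k-1$ vertices of $A$ (forming a clique) and all edges among some set $T$ of $\tau$ vertices of $B$. Let $S \subseteq B$ be a set of $k$ vertices with $T \subseteq S$. Then $\tau(G[S]) = \tau - 1$, $G$ does not contain $k$ pairwise vertex-disjoint odd $S$-cycles, and there is no set $X$ of at most $2k-3+\tau(G[S])$ vertices such that $G - X$ is bipartite.
   Context: All graphs are finite and simple. An $S$-cycle is a cycle containing at least one vertex of $S$. For a graph $H$, $\tau(H)$ denotes the vertex cover number of $H$ (minimum size of a vertex set meeting every edge). *)

From mathcomp Require Import all_boot.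
Set Implicit Arguments. Unset Strict Implicit. Unset Printing Implicit Defensive.

(* A simple graph on a finite type V is a symmetric irreflexive rel e. *)

Definition is_vcover (V : finType) (e : rel V) (S X : {set V}) : bool :=
  (X \subset S) &&
  [forall x in S, forall y in S, e x y ==> (x \in X) || (y \in X)].

(* tau(G[S]) : minimum size of a vertex cover of G[S] (S itself is one). *)
Definition vc_num (V : finType) (e : rel V) (S : {set V}) : nat :=
  \big[minn/#|S|]_(X : {set V} | is_vcover e S X) #|X|.

Definition is_graph_cycle (V : finType) (e : rel V) (c : seq V) : bool :=
  [&& uniq c, 3 <= size c & cycle e c].

Definition odd_S_cycle (V : finType) (e : rel V) (S : {set V}) (c : seq V) : bool :=
  [&& is_graph_cycle e c, odd (size c) & has (mem S) c].

Definition bipartite_minus (V : finType) (e : rel V) (X : {set V}) : Prop :=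
  exists col : V -> bool,
    forall x y, x \notin X -> y \notin X -> e x y -> col x != col y.

From mathcomp Require Import all_boot zify.

(* The only edges of G[S] are those of the clique T, so a vertex cover of G[S]
   misses at most one vertex of T, while T minus one vertex is a cover.
   An odd cycle cannot be properly 2-coloured by the sides A and B, so it has
   an edge inside C or inside T; as it also meets S, it contains two vertices of
   S, or one of S and two of C.  Giving weight 2 to S and 1 to C, each odd
   S-cycle weighs at least 4, while 2|S| + |C| = 4k - 1.
   If G - X is bipartite and X is small, a surviving vertex of B is adjacent to
   all of C, so by the absence of triangles at most one vertex of C survives;
   symmetrically for T with a surviving vertex of A.  Hence
   |X| >= (2k - 2) + (tau - 1). *)

Set Implicit Arguments.
Unset Strict Implicit.
Unset Printing Implicit Defensive.

Definition clique (V : finType) (e : rel V) (K : {set V}) : Prop :=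
  {in K &, forall u v, u != v -> e u v}.

Lemma card_le1_clique_minus (V : finType) (e : rel V) (K X : {set V}) :
  {in K &, forall u v, u \notin X -> v \notin X -> ~ e u v} ->
  clique e K -> #|K :\: X| <= 1.
Proof.
move=> no_edge cliqueK; apply/card_le1_eqP => u v.
rewrite !inE => /andP [uX uK] /andP [vX vK].
have [//|vu] := eqVneq v u.
by case: (no_edge u v uK vK uX vX); apply: cliqueK; rewrite // eq_sym.
Qed.

Lemma pred_card_le_setI (V : finType) (K X : {set V}) :
  #|K :\: X| <= 1 -> #|K|.-1 <= #|K :&: X|.
Proof. by move=> le1; have := cardsID X K; lia. Qed.

Section VertexCover.

Variables (V : finType) (e : rel V) (S : {set V}).

Lemma vc_num_min X : is_vcover e S X -> vc_num e S <= #|X|.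
Proof.
move=> coverX; rewrite /vc_num; have := mem_index_enum X.
elim: (index_enum _) => [|Y r IH] //; rewrite inE big_cons => /predU1P [<-|Xr].
  by rewrite coverX geq_minl.
by case: ifP => _; rewrite ?geq_min IH ?orbT.
Qed.

Lemma vc_num_ge m :
  m <= #|S| -> (forall X, is_vcover e S X -> m <= #|X|) -> m <= vc_num e S.
Proof.
move=> mS mX; apply: (big_ind (leq m)) => // p q mp mq.
by rewrite leq_min mp mq.
Qed.

Lemma vcover_clique_minus X (K : {set V}) :
  is_vcover e S X -> K \subset S -> clique e K -> #|K :\: X| <= 1.
Proof.
case/andP=> _ /forall_inP coverX /subsetP KS; apply: card_le1_clique_minus.
move=> u v uK vK uX vX euv.
move: (coverX u (KS u uK)) => /forall_inP /(_ v (KS v vK)) /implyP /(_ euv).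
by rewrite (negbTE uX) (negbTE vX).
Qed.

Lemma vcover_clique_but_one (K : {set V}) t :
  irreflexive e -> K \subset S ->
  {in S &, forall x y, e x y -> x \in K /\ y \in K} ->
  is_vcover e S (K :\ t).
Proof.
move=> irr_e KS edgesK; apply/andP; split; first by rewrite subDset subsetU ?KS ?orbT.
apply/forall_inP => x xS; apply/forall_inP => y yS; apply/implyP => exy.
have [xK yK] := edgesK x y xS yS exy.
rewrite !in_setD1 xK yK !andbT -negb_and.
by apply: contraTN exy => /andP [/eqP -> /eqP ->]; rewrite irr_e.
Qed.

Lemma vc_num_clique (K : {set V}) t :
  irreflexive e -> t \in K -> K \subset S -> clique e K ->
  {in S &, forall x y, e x y -> x \in K /\ y \in K} ->
  vc_num e S = #|K|.-1.
Proof.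
move=> irr_e tK KS cliqueK edgesK; apply/eqP; rewrite eqn_leq; apply/andP; split.
  have := vc_num_min (vcover_clique_but_one t irr_e KS edgesK).
  by rewrite (cardsD1 t K) tK.
apply: vc_num_ge => [|X coverX].
  by apply: leq_trans (leq_pred _) (subset_leq_card KS).
apply: leq_trans (pred_card_le_setI (vcover_clique_minus coverX KS cliqueK)) _.
by rewrite subset_leq_card ?subsetIr.
Qed.

End VertexCover.

Lemma sum_card_setI_disjoint (I V : finType) (D : {set V}) (P : I -> {set V}) :
  (forall i j, i != j -> [disjoint P i & P j]) -> \sum_i #|D :&: P i| <= #|D|.
Proof.
move=> disjP; under eq_bigr => i _ do rewrite -sum1_card.
rewrite -partition_disjoint_bigcup => [|i j ij]; last first.
  exact: disjointWl (subsetIr _ _) (disjointWr (subsetIr _ _) (disjP i j ij)).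
by rewrite sum1_card subset_leq_card //; apply/bigcupsP => i _; apply: subsetIl.
Qed.

Lemma card_setI_disjoint (V : finType) (C T X : {set V}) :
  [disjoint C & T] -> #|C :&: X| + #|T :&: X| <= #|X|.
Proof.
move=> dCT; have /leqifP := leq_card_setU (C :&: X) (T :&: X).
rewrite (disjointWl (subsetIl _ _) (disjointWr (subsetIl _ _) dCT)) => /eqP <-.
by rewrite subset_leq_card // subUset !subsetIr.
Qed.

Lemma alternating_path_last (V : Type) (col : V -> bool) x p :
  path (fun a b => col a != col b) x p -> col (last x p) = col x (+) odd (size p).
Proof.
elim: p x => [|y p IH] x /=; first by rewrite addbF.
case/andP => /negPf xy /IH ->.
by move: xy; case: (col x); case: (col y); case: (odd (size p)).
Qed.

Lemma odd_cycle_monochromatic_edge (V : finType) (e : rel V) (col : V -> bool) c :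
  cycle e c -> odd (size c) -> exists a b, [/\ a \in c, b \in c, e a b & col a = col b].
Proof.
case: c => [|x p] //= cyc odd_c.
pose mono a b := [&& a \in x :: p, b \in x :: p, e a b & col a == col b].
have [/existsP [a /existsP [b /and4P [ac bc eab /eqP ab]]]|] :=
  boolP [exists a, exists b, mono a b]; first by exists a, b.
move/existsPn => no_mono; exfalso.
have alt : {in x :: p &, subrel e (fun a b => col a != col b)}.
  move=> a b ac bc eab; apply/eqP => ab.
  by move/existsPn: (no_mono a) => /(_ b); rewrite /mono ac bc eab ab eqxx.
have onc : all (mem (x :: p)) (x :: rcons p x).
  by apply/allP => y; rewrite inE mem_rcons => /predU1P [->|//]; apply: mem_head.
have := alternating_path_last (sub_in_path alt onc cyc).
by rewrite last_rcons size_rcons /= odd_c addbT; case: (col x).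
Qed.

Section BipartiteDeletion.

Variables (V : finType) (e : rel V) (X : {set V}).
Hypothesis bipX : bipartite_minus e X.

Lemma bipartite_minus_no_triangle u v w :
  u \notin X -> v \notin X -> w \notin X -> e u v -> e u w -> e v w -> False.
Proof.
case: bipX => col proper uX vX wX euv euw evw.
move: (proper _ _ uX vX euv) (proper _ _ uX wX euw) (proper _ _ vX wX evw).
by case: (col u); case: (col v); case: (col w).
Qed.

Lemma bipartite_minus_clique_nbr (K : {set V}) w :
  w \notin X -> clique e K -> {in K, forall u, e u w} -> #|K :\: X| <= 1.
Proof.
move=> wX cliqueK nbr_w; apply: card_le1_clique_minus cliqueK => u v uK vK uX vX euv.
exact: (bipartite_minus_no_triangle uX vX wX euv (nbr_w u uK) (nbr_w v vK)).
Qed.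

End BipartiteDeletion.

Section CliquesOverCompleteBipartite.

Variables (V : finType) (e : rel V) (A B C T : {set V}).
Hypotheses (dAB : [disjoint A & B]) (CA : C \subset A) (TB : T \subset B).
Hypothesis edgeE : forall x y, e x y =
  (x != y) &&
  [|| (x \in A) && (y \in B), (x \in B) && (y \in A),
      (x \in C) && (y \in C) | (x \in T) && (y \in T)].

Lemma edge_irr : irreflexive e.
Proof. by move=> x; rewrite edgeE eqxx. Qed.

Lemma edge_AB x y : x \in A -> y \in B -> e x y /\ e y x.
Proof.
move=> xA yB; have xy : x != y by apply: contraTneq yB => <-; rewrite (disjointFr dAB xA).
by rewrite !edgeE xA yB xy eq_sym xy !orbT.
Qed.

Lemma clique_C : clique e C.
Proof. by move=> u v uC vC uv; rewrite edgeE uv uC vC !orbT. Qed.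

Lemma clique_T : clique e T.
Proof. by move=> u v uT vT uv; rewrite edgeE uv uT vT !orbT. Qed.

Lemma edge_same_side x y :
  e x y -> (x \in A) = (y \in A) -> (x \in C) && (y \in C) || (x \in T) && (y \in T).
Proof.
rewrite edgeE => /andP [_ /or4P [] /andP [xD yD]]; rewrite ?xD ?yD ?orbT //.
- by rewrite (disjointFl dAB yD).
- by rewrite (disjointFl dAB xD).
Qed.

Lemma vc_num_over_T (S : {set V}) t :
  S \subset B -> T \subset S -> t \in T -> vc_num e S = #|T|.-1.
Proof.
move=> SB TS tT; apply: vc_num_clique edge_irr tT TS clique_T _ => x y xS yS exy.
have [xB yB] := (subsetP SB x xS, subsetP SB y yS).
have := edge_same_side exy; rewrite !(disjointFl dAB) // => /(_ erefl) /orP [].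
  by case/andP=> /(subsetP CA); rewrite (disjointFl dAB xB).
by case/andP.
Qed.

Lemma odd_S_cycle_weight (S : {set V}) c :
  S \subset B -> T \subset S -> odd_S_cycle e S c ->
  4 <= 2 * #|S :&: [set x in c]| + #|C :&: [set x in c]|.
Proof.
move=> SB TS /and3P [/and3P [_ _ cyc] odd_c /hasP [s sc sS]].
have s_hit : 0 < #|S :&: [set x in c]| by apply/card_gt0P; exists s; rewrite !inE sc andbT.
have [a [b [ac bc eab sameA]]] := odd_cycle_monochromatic_edge (fun x => x \in A) cyc odd_c.
have ab : a != b by apply: contraTneq eab => ->; rewrite edge_irr.
have pair_hit (D : {set V}) : a \in D -> b \in D -> 2 <= #|D :&: [set x in c]|.
  move=> aD bD; have := cards2 a b; rewrite ab => <-; apply: subset_leq_card.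
  by apply/subsetP => x; rewrite !inE => /orP [] /eqP ->; rewrite ?aD ?bD ?ac ?bc.
case/orP: (edge_same_side eab sameA) => /andP [aD bD].
  exact: leq_add (leq_mul (leqnn 2) s_hit) (pair_hit C aD bD).
have S2 := pair_hit S (subsetP TS a aD) (subsetP TS b bD).
exact: leq_add (leq_mul (leqnn 2) S2) (leq0n _).
Qed.

Lemma no_odd_S_cycle_packing (I : finType) (S : {set V}) :
  S \subset B -> T \subset S -> 2 * #|S| + #|C| < 4 * #|I| ->
  ~ exists cs : I -> seq V,
      (forall i, odd_S_cycle e S (cs i)) /\
      (forall i j, i != j -> [disjoint cs i & cs j]).
Proof.
move=> SB TS small [cs [odd_cs disj_cs]].
pose P i := [set x in cs i].
have disjP i j : i != j -> [disjoint P i & P j].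
  have memP l : P l =i cs l by move=> x; rewrite inE.
  by rewrite (eq_disjoint (memP i)) (eq_disjoint_r (memP j)); apply: disj_cs.
have : \sum_(i : I) 4 <= \sum_i (2 * #|S :&: P i| + #|C :&: P i|).
  by apply: leq_sum => i _; apply: odd_S_cycle_weight.
rewrite big_split -big_distrr sum_nat_const /= => total.
change #|xpredT| with #|I| in total.
have := sum_card_setI_disjoint S disjP; have := sum_card_setI_disjoint C disjP.
lia.
Qed.

Lemma bipartite_deletion_lb (X : {set V}) :
  bipartite_minus e X -> #|X| < #|A| -> #|X| < #|B| -> #|C|.-1 + #|T|.-1 <= #|X|.
Proof.
move=> bipX XA XB.
have outside (D : {set V}) : #|X| < #|D| -> exists2 w, w \in D & w \notin X.
  by move=> XD; apply/subsetPn; apply: contraTN XD; rewrite -leqNgt; apply: subset_leq_card.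
have [wB wBB wBX] := outside B XB; have [wA wAA wAX] := outside A XA.
have C1 : #|C :\: X| <= 1.
  apply: (bipartite_minus_clique_nbr bipX wBX clique_C) => u uC.
  by case: (edge_AB (subsetP CA u uC) wBB).
have T1 : #|T :\: X| <= 1.
  apply: (bipartite_minus_clique_nbr bipX wAX clique_T) => u uT.
  by case: (edge_AB wAA (subsetP TB u uT)).
have := pred_card_le_setI C1; have := pred_card_le_setI T1.
have := card_setI_disjoint X (disjointWl CA (disjointWr TB dAB)).
lia.
Qed.

End CliquesOverCompleteBipartite.

Theorem mainTheorem9 (k tau : nat) (V : finType) (e : rel V)
    (A B C T S : {set V}) :
  1 <= k -> 1 <= tau <= k ->
  [disjoint A & B] -> A :|: B = [set: V] ->
  4 * k <= #|A| -> 4 * k <= #|B| ->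
  C \subset A -> #|C| = 2 * k - 1 ->
  T \subset B -> #|T| = tau ->
  (forall x y, e x y =
     (x != y) &&
     [|| (x \in A) && (y \in B), (x \in B) && (y \in A),
         (x \in C) && (y \in C) | (x \in T) && (y \in T)]) ->
  S \subset B -> #|S| = k -> T \subset S ->
  [/\ vc_num e S = tau - 1,
      ~ (exists cs : 'I_k -> seq V,
           (forall i, odd_S_cycle e S (cs i)) /\
           (forall i j, i != j -> [disjoint cs i & cs j]))
    & ~ (exists X : {set V}, #|X| + 3 <= 2 * k + vc_num e S /\ bipartite_minus e X)].
Proof.
move=> k_gt0 /andP [tau_gt0 tau_le_k] dAB _ cardA cardB CA cardC TB cardT
  edgeE SB cardS TS.
have [t tT] : exists t, t \in T by apply/card_gt0P; rewrite cardT.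
have vcS : vc_num e S = tau - 1.
  by rewrite (vc_num_over_T dAB CA edgeE SB TS tT) cardT subn1.
split => //.
  apply: (no_odd_S_cycle_packing dAB CA TB edgeE SB TS).
  by rewrite card_ord cardS cardC; lia.
case=> X [smallX bipX].
have := bipartite_deletion_lb dAB CA TB edgeE bipX.
rewrite cardC cardT vcS in smallX *; lia.
Qed.
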